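(* Let $(R,\mathfrak{m})$ be a commutative Artinian local ring with identity, $\mathfrak{m}\neq0$ and $\mathfrak{m}^2=0$, and let $n\ge7$ be an integer. If $|R|>4$ (including $R$ infinite), then $L(x^n)=\{3,4,5,\dots,n-2\}\cup\{n\}$ if $n$ is odd, and $L(x^n)=\{2,3,4,\dots,n-2\}\cup\{n\}$ if $n$ is even. If $|R|=4$, then $L(x^n)=\{3,4,5,\dots,n-4\}\cup\{n-2,n\}$ if $n$ is odd, and $L(x^n)=\{2,3,4,\dots,n-4\}\cup\{n-2,n\}$ if $n$ is even.
   Context: A nonunit polynomial in $R[x]$ is irreducible if in any factorization into two polynomials one factor is a unit of $R[x]$ (a polynomial $a_0+\dots+a_dx^d$ is a unit iff $a_0$ is a unit of $R$ and $a_i\in\mathfrak{m}$ for $i>0$). A positive integer $k$ is a length of $f\in R[x]$ if $f$ is a product of $k$ irreducible polynomials of $R[x]$; $L(f)$ denotes the set of lengths of $f$. *)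

From HB Require Import structures.
From mathcomp Require Import all_boot all_order all_algebra.
Set Implicit Arguments. Unset Strict Implicit. Unset Printing Implicit Defensive.
Import Order.TTheory GRing.Theory Num.Theory.
Local Open Scope ring_scope.

Definition is_ideal (R : comUnitRingType) (I : R -> Prop) : Prop :=
  I 0 /\ (forall x y, I x -> I y -> I (x + y)) /\ (forall r x, I x -> I (r * x)).

Definition artinian (R : comUnitRingType) : Prop :=
  forall I : nat -> R -> Prop,
    (forall k, is_ideal (I k)) ->
    (forall k x, I k.+1 x -> I k x) ->
    exists N, forall k, (N <= k)%N -> forall x, I k x <-> I N x.

(* Local ring: the nonunits form an ideal (which is then the unique maximal
   ideal m). Closure under multiplication by R is automatic. *)
Definition local_ring (R : comUnitRingType) : Prop :=
  forall x y : R, x \isn't a GRing.unit -> y \isn't a GRing.unit ->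
    (x + y) \isn't a GRing.unit.

Definition in_max (R : comUnitRingType) (x : R) : Prop := x \isn't a GRing.unit.

Definition poly_unit (R : comUnitRingType) (p : {poly R}) : Prop :=
  exists q : {poly R}, p * q = 1.

Definition poly_irr (R : comUnitRingType) (p : {poly R}) : Prop :=
  ~ poly_unit p /\
  forall f g : {poly R}, p = f * g -> poly_unit f \/ poly_unit g.

Definition is_length (R : comUnitRingType) (f : {poly R}) (k : nat) : Prop :=
  (0 < k)%N /\
  exists s : seq {poly R},
    size s = k /\ (forall g, g \in s -> poly_irr g) /\ \prod_(g <- s) g = f.

Definition card_eq4 (T : eqType) : Prop :=
  exists s : seq T, uniq s /\ size s = 4%N /\ forall x : T, x \in s.

Definition card_gt4 (T : eqType) : Prop :=
  exists s : seq T, uniq s /\ size s = 5%N.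

From Pilot Require Import Defs.
From HB Require Import structures.
From mathcomp Require Import all_boot all_order all_algebra zify ring.
Import Order.TTheory GRing.Theory Num.Theory.
Local Open Scope ring_scope.
Set Implicit Arguments. Unset Strict Implicit.

(* Since [m^2 = 0] and [R/m] is a field, every divisor of [X^n] is congruent modulo [m[x]] to
   [u X^a] with [u] a unit; call [a] its m-degree.  Such a polynomial with [a > 0] is irreducible
   iff [a = 1] or its constant term is nonzero.  So in a factorisation of [X^n] into irreducibles
   the m-degrees are positive and sum to [n], and a largest one [a >= 2] is attained twice:
   otherwise the coefficient of [X^(n - a)] in the product would be a unit times the nonzero
   constant term of the factor of top m-degree.  Among such partitions of [n] the numbers of
   parts [1], [n - 1] and, for odd [n], [2] are impossible.  When [|R| = 4], [m = {0, e}] and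
   the same coefficient is [e] times the number of factors of top m-degree, which therefore is
   even; this also excludes [n - 3] parts.  All other lengths are obtained by padding with
   factors [X] one of [(X^a + e)(X^a - e) = X^(2a)],
   [(X^(N+2) + e - e X^N)(X^(N+2) - e)(X^2 + e) = X^(2N+6)] and, when [|R| > 4] (so that [m]
   has nonzero [x], [y] with [x + y] nonzero), [(X^2 + x)(X^2 + y)(X^2 - x - y) = X^6]. *)

Section Partitions.
Local Open Scope nat_scope.
Variables (n : nat) (ds : seq nat).
Hypothesis ds_pos : all (leq 1) ds.
Hypothesis ds_sum : sumn ds = n.
Hypothesis ds_top : forall d, d \in ds -> 1 < d -> 1 < count (leq d) ds.

Lemma sumn_ge_count d : size ds + d.-1 * count (leq d) ds <= sumn ds.
Proof.
have -> : count (leq d) ds = \sum_(x <- ds) (d <= x) by rewrite -sumn_count sumnE big_map.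
rewrite -sum1_size big_distrr -big_split sumnE /= big_seq [X in _ <= X]big_seq.
by apply: leq_sum => x /(allP ds_pos); case: leqP; lia.
Qed.

Lemma part_top_bound d : d \in ds -> 1 < d -> 2 * d + size ds <= n + 2.
Proof.
move=> dds d1; have := sumn_ge_count d; have := ds_top dds d1.
rewrite ds_sum; nia.
Qed.

Lemma part_size_le : size ds <= n.
Proof. by have := sumn_ge_count 0; rewrite ds_sum; lia. Qed.

Lemma part_has_top : size ds < n -> exists2 d, d \in ds & 1 < d.
Proof.
move=> lt_size; apply/hasP; apply: contraLR lt_size => /hasPn small.
rewrite -leqNgt -ds_sum sumnE -sum1_size big_seq [X in _ <= X]big_seq.
by apply: leq_sum => x /small; lia.
Qed.

Lemma part_size_neq1 : 1 < n -> size ds != 1.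
Proof.
move=> n_gt1; apply/eqP => size1.
have [d dds d1] : exists2 d, d \in ds & 1 < d by apply: part_has_top; lia.
by have := ds_top dds d1; have := count_size (leq d) ds; rewrite size1; lia.
Qed.

Lemma part_size_neq_pred : 1 < n -> size ds != n.-1.
Proof.
move=> n_gt1; apply/eqP => size_pred.
have [d dds d1] : exists2 d, d \in ds & 1 < d by apply: part_has_top; lia.
by have := part_top_bound dds d1; lia.
Qed.

Lemma part_size_neq2 : odd n -> size ds != 2.
Proof.
move=> odd_n; apply/eqP => size2.
have [x [y ds_xy]] : exists x y, ds = [:: x; y].
  by move: size2; case: ds => [|x [|y []]] // _; exists x, y.
have bound z : z \in ds -> z <= 1 \/ 2 * z <= n.
  by move=> zds; case: (leqP z 1) => [|/(part_top_bound zds)]; [left | right; lia].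
have := bound x; have := bound y; move: ds_pos ds_sum; rewrite ds_xy !inE !eqxx orbT /=.
lia.
Qed.

Lemma part_size_neq_sub3 : 2 < n ->
  (all (geq 2) ds -> ~~ odd (count (pred1 2) ds)) -> size ds != n - 3.
Proof.
move=> n_gt2 even2; apply/eqP => size_sub3.
have small : all (geq 2) ds.
  apply/allP => d dds /=; case: (leqP d 1) => [|/(part_top_bound dds)]; lia.
have : sumn ds = size ds + count (pred1 2) ds.
  rewrite -sumn_count !sumnE -sum1_size big_map -big_split big_seq [RHS]big_seq /=.
  apply: eq_bigr => x xds; move: (allP small x xds) (allP ds_pos x xds).
  by case: x {xds} => [|[|[]]].
move: (even2 small); rewrite ds_sum size_sub3; case: count => [|[|[|[]]]] //=; lia.
Qed.

End Partitions.

Section MaxSquareZero.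
Variable R : comUnitRingType.
Hypothesis R_local : local_ring R.
Hypothesis max_mul0 : forall a b : R, in_max a -> in_max b -> a * b = 0.

Lemma in_max0 : in_max (0 : R).
Proof. by rewrite /in_max unitr0. Qed.

Lemma in_maxD (x y : R) : in_max x -> in_max y -> in_max (x + y).
Proof. exact: R_local. Qed.

Lemma in_maxN (x : R) : in_max x -> in_max (- x).
Proof. by rewrite /in_max unitrN. Qed.

Lemma in_maxB (x y : R) : in_max x -> in_max y -> in_max (x - y).
Proof. by move=> hx hy; apply: in_maxD => //; apply: in_maxN. Qed.

Lemma in_maxMl (r x : R) : in_max x -> in_max (r * x).
Proof. by rewrite /in_max unitrM => /negbTE ->; rewrite andbF. Qed.

Lemma in_maxMr (r x : R) : in_max x -> in_max (x * r).
Proof. by rewrite mulrC; apply: in_maxMl. Qed.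

Lemma in_max_sum (I : Type) (r : seq I) (P : pred I) (F : I -> R) :
  (forall i, P i -> in_max (F i)) -> in_max (\sum_(i <- r | P i) F i).
Proof. by move=> h; apply: big_ind; [exact: in_max0 | exact: in_maxD | exact: h]. Qed.

Lemma unitrD_max (u x : R) : u \is a GRing.unit -> in_max x -> u + x \is a GRing.unit.
Proof.
move=> hu hx; apply/negPn/negP => h.
by have := in_maxB h hx; rewrite addrK /in_max hu.
Qed.

Definition max_poly (p : {poly R}) := forall i, in_max p`_i.

Lemma max_polyD p q : max_poly p -> max_poly q -> max_poly (p + q).
Proof. by move=> hp hq i; rewrite coefD; apply: in_maxD. Qed.

Lemma max_polyN p : max_poly p -> max_poly (- p).
Proof. by move=> hp i; rewrite coefN; apply: in_maxN. Qed.

Lemma max_polyB p q : max_poly p -> max_poly q -> max_poly (p - q).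
Proof. by move=> hp hq; apply: max_polyD => //; apply: max_polyN. Qed.

Lemma max_polyC c : in_max c -> max_poly c%:P.
Proof. by move=> hc i; rewrite coefC; case: eqP => _ //; apply: in_max0. Qed.

Lemma max_polyMl q p : max_poly p -> max_poly (q * p).
Proof. by move=> hp i; rewrite coefM; apply: in_max_sum => j _; apply: in_maxMl. Qed.

Lemma max_poly_mul0 p q : max_poly p -> max_poly q -> p * q = 0.
Proof.
move=> hp hq; apply/polyP => i; rewrite coefM coef0.
by apply: big1 => j _; apply: max_mul0.
Qed.

Definition mono_mod_max (a : nat) (f : {poly R}) :=
  f`_a \is a GRing.unit /\ forall i, i != a -> in_max f`_i.

Definition mdeg (f : {poly R}) := find (fun c : R => c \is a GRing.unit) f.

Lemma max_poly_no_unit (f : {poly R}) :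
  ~~ has (fun c : R => c \is a GRing.unit) f -> max_poly f.
Proof.
move/hasPn => nunit i; case: (ltnP i (size f)) => hi.
  by apply: nunit; apply: mem_nth.
by rewrite nth_default //; apply: in_max0.
Qed.

Lemma mdeg_unit (f : {poly R}) :
  has (fun c : R => c \is a GRing.unit) f -> f`_(mdeg f) \is a GRing.unit.
Proof. exact: nth_find. Qed.

Lemma in_max_lt_mdeg (f : {poly R}) i : (i < mdeg f)%N -> in_max f`_i.
Proof. by move=> h; rewrite /in_max (before_find 0 h). Qed.

Lemma unit_coef_lt_size (f : {poly R}) i : f`_i \is a GRing.unit -> (i < size f)%N.
Proof.
by case: (ltnP i (size f)) => // hi; rewrite nth_default // unitr0.
Qed.

Lemma mono_mod_max_mdeg a (f : {poly R}) : mono_mod_max a f -> mdeg f = a.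
Proof.
move=> [ha hO].
have hasf : has (fun c : R => c \is a GRing.unit) f.
  by apply/hasP; exists f`_a => //; apply: mem_nth; apply: unit_coef_lt_size.
case: (ltngtP (mdeg f) a) => // h.
  by have := hO _ (negbT (ltn_eqF h)); rewrite /in_max mdeg_unit.
by have := in_max_lt_mdeg h; rewrite /in_max ha.
Qed.

Lemma mono_mod_maxP a (f : {poly R}) : f`_a \is a GRing.unit ->
  (forall i, (i < a)%N -> in_max f`_i) -> (forall i, f`_i \is a GRing.unit -> (i <= a)%N) ->
  mono_mod_max a f.
Proof.
move=> fa below above; split => // i i_neq_a; apply/negP => fi.
by case: (ltnP i a) => [/below /negP //| a_le_i]; have := above _ fi; lia.
Qed.

Lemma coefM_index_unit (f g h : {poly R}) a b A :
  f * g = h -> mono_mod_max A h ->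
  f`_a \is a GRing.unit -> g`_b \is a GRing.unit ->
  (forall i, (i <= a + b)%N -> i != a -> in_max f`_i \/ in_max g`_(a + b - i)) ->
  (a + b)%N = A.
Proof.
move=> fgh [_ hO] hfa hgb others; apply/eqP/negP => /negP /hO.
rewrite -fgh coefM.
have ha : (a < (a + b).+1)%N by rewrite ltnS leq_addr.
rewrite (bigD1 (Ordinal ha)) //= addKn /in_max; apply/negP/negPn; apply: unitrD_max.
  by rewrite unitrM hfa hgb.
apply: in_max_sum => i /= hi.
have hia : (i : nat) != a by apply: contra hi => /eqP hi; apply/eqP/val_inj.
have := ltn_ord i; rewrite ltnS => hi2.
by case: (others _ hi2 hia) => hh; [apply: in_maxMr | apply: in_maxMl].
Qed.

Lemma has_unit_coef_factor (f g : {poly R}) A :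
  mono_mod_max A (f * g) -> has (fun c : R => c \is a GRing.unit) f.
Proof.
move=> [hA _]; apply/negPn/negP => /max_poly_no_unit hf.
by have := max_polyMl g hf A; rewrite mulrC /in_max hA.
Qed.

Lemma mono_mod_max_factor (f g h : {poly R}) A :
  f * g = h -> mono_mod_max A h ->
  exists a b, [/\ mono_mod_max a f, mono_mod_max b g & (a + b)%N = A].
Proof.
move=> fgh hA.
have hasf : has (fun c : R => c \is a GRing.unit) f.
  by apply: (@has_unit_coef_factor _ g A); rewrite fgh.
have hasg : has (fun c : R => c \is a GRing.unit) g.
  by apply: (@has_unit_coef_factor _ f A); rewrite mulrC fgh.
have exf : exists i, f`_i \is a GRing.unit by exists (mdeg f); exact: mdeg_unit.
have exg : exists i, g`_i \is a GRing.unit by exists (mdeg g); exact: mdeg_unit.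
have [a1 f_a1 le_a1] := ex_maxnP exf (fun i => @ltnW _ _ \o @unit_coef_lt_size f i).
have [b1 g_b1 le_b1] := ex_maxnP exg (fun i => @ltnW _ _ \o @unit_coef_lt_size g i).
have f_mdeg := mdeg_unit hasf; have g_mdeg := mdeg_unit hasg.
(* The first unit coefficients of [f] and [g] give the unit coefficient of index [A] of [h],
   and so do the last ones; hence [f] and [g] each have a single unit coefficient. *)
have first_sum : (mdeg f + mdeg g)%N = A.
  apply: (coefM_index_unit fgh) => // i i_le hia.
  case: (ltnP i (mdeg f)) => hi; first by left; apply: in_max_lt_mdeg.
  by right; apply: in_max_lt_mdeg; lia.
have last_sum : (a1 + b1)%N = A.
  apply: (coefM_index_unit fgh) => // i i_le hia.
  case: (ltnP i a1) => hi; [right | left]; apply/negP.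
    by move=> /le_b1; lia.
  by move=> /le_a1; lia.
have eqa : mdeg f = a1 by have := le_a1 _ f_mdeg; have := le_b1 _ g_mdeg; lia.
have eqb : mdeg g = b1 by have := le_a1 _ f_mdeg; have := le_b1 _ g_mdeg; lia.
exists (mdeg f), (mdeg g); split => //.
  by apply: mono_mod_maxP => //; [exact: in_max_lt_mdeg | rewrite eqa].
by apply: mono_mod_maxP => //; [exact: in_max_lt_mdeg | rewrite eqb].
Qed.

Lemma mono_mod_max_Xn n : mono_mod_max n ('X^n : {poly R}).
Proof.
split; first by rewrite coefXn eqxx unitr1.
by move=> i hi; rewrite coefXn (negbTE hi); apply: in_max0.
Qed.

Lemma mono_mod_max_XnD a (p : {poly R}) : max_poly p -> mono_mod_max a ('X^a + p).
Proof.
move=> hp; split.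
  by rewrite coefD coefXn eqxx unitrD_max ?unitr1.
by move=> i hi; rewrite coefD coefXn (negbTE hi) add0r.
Qed.

Lemma mono_mod_max0_unit (f : {poly R}) : mono_mod_max 0 f -> Defs.poly_unit f.
Proof.
move=> [h0 hO]; set c := f`_0; set p := f - c%:P.
have mp : max_poly p.
  move=> i; rewrite /p coefB coefC; case: eqP => [->|/eqP hi].
    by rewrite subrr; apply: in_max0.
  by rewrite subr0; apply: hO.
set u := c^-1%:P; have cu : c%:P * u = 1 by rewrite -polyCM mulrV.
(* [c + p] with [p^2 = 0] has inverse [c^-1 - c^-2 p]. *)
exists (u - u * u * p).
have -> : f = c%:P + p by rewrite /p addrC subrK.
have -> : (c%:P + p) * (u - u * u * p) = 1 + (c%:P * u - 1) * (1 - u * p) - u * u * (p * p).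
  by ring.
by rewrite cu subrr mul0r addr0 (max_poly_mul0 mp mp) mulr0 subr0.
Qed.

Lemma mono_mod_max_prod (s : seq {poly R}) h A :
  \prod_(f <- s) f = h -> mono_mod_max A h ->
  (forall f, f \in s -> mono_mod_max (mdeg f) f) /\ (\sum_(f <- s) mdeg f)%N = A.
Proof.
elim: s h A => [|g t IH] h A.
  rewrite !big_nil => <- /mono_mod_max_mdeg; rewrite -(mono_mod_max_mdeg (mono_mod_max_Xn 0)).
  by rewrite expr0.
rewrite big_cons => e hA.
have [a [b [ga gb <-]]] := mono_mod_max_factor e hA.
have [IH1 <-] := IH _ _ erefl gb.
rewrite big_cons (mono_mod_max_mdeg ga); split=> // f.
by rewrite inE => /orP [/eqP ->|/IH1]; rewrite ?(mono_mod_max_mdeg ga).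
Qed.

Lemma mono_mod_max_nonunit a (f : {poly R}) :
  mono_mod_max a f -> (0 < a)%N -> ~ Defs.poly_unit f.
Proof.
move=> ha a_gt0 [q fq].
have := mono_mod_max_Xn 0; rewrite expr0 -fq => /(mono_mod_max_factor erefl).
move=> [a' [b' [ha' _ eab]]].
by move: eab a_gt0; rewrite -(mono_mod_max_mdeg ha) (mono_mod_max_mdeg ha'); lia.
Qed.

Lemma poly_irr_mono a (f : {poly R}) :
  mono_mod_max a f -> (0 < a)%N -> (a = 1%N \/ f`_0 != 0) -> poly_irr f.
Proof.
move=> ha a_gt0 a1_or_f0; split; first exact: mono_mod_max_nonunit ha a_gt0.
move=> g1 g2 e.
have [[|b] [[|c] [hb hc ebc]]] := mono_mod_max_factor (esym e) ha.
- by left; apply: mono_mod_max0_unit.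
- by left; apply: mono_mod_max0_unit.
- by right; apply: mono_mod_max0_unit.
(* [b, c > 0]: both constant terms lie in [m], so their product [f`_0] is [0]. *)
case: a1_or_f0 => [a1|]; first by move: ebc; rewrite a1; lia.
rewrite e coef0M; case: hb => _ hb; case: hc => _ hc.
by rewrite max_mul0 ?eqxx //; [apply: hb | apply: hc].
Qed.

Lemma poly_irr_XnD a (p : {poly R}) : max_poly p -> (0 < a)%N ->
  (a = 1%N \/ p`_0 != 0) -> poly_irr ('X^a + p).
Proof.
move=> hp a_gt0 h; apply: (poly_irr_mono (mono_mod_max_XnD a hp)) => //.
case: h => [->|h]; [by left | right].
by rewrite coefD coefXn [(0 == a)%N]eq_sym (negbTE (lt0n_neq0 a_gt0)) add0r.
Qed.

Lemma poly_irr_mdeg_gt0 a (f : {poly R}) : poly_irr f -> mono_mod_max a f -> (0 < a)%N.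
Proof. by case: a => // [[nunit _]] /mono_mod_max0_unit. Qed.

Lemma poly_irr_coef0 a (f : {poly R}) :
  poly_irr f -> mono_mod_max a f -> (1 < a)%N -> f`_0 != 0.
Proof.
move=> [nunit irr] [fa fO] a_gt1; apply/negP => /eqP f0.
have fE : f = drop_poly 1 f * 'X.
  rewrite -{1}(poly_take_drop 1 f) expr1 [take_poly 1 f]poly_def big_ord1 f0 scale0r.
  by rewrite add0r.
have mdrop : mono_mod_max a.-1 (drop_poly 1 f).
  split; first by rewrite coef_drop_poly addn1 prednK 1?ltnW.
  by move=> i hi; rewrite coef_drop_poly; apply: fO; move: hi; apply: contra => /eqP; lia.
case: (irr _ _ fE); first by apply: (mono_mod_max_nonunit mdrop); lia.
exact: (mono_mod_max_nonunit (mono_mod_max_Xn 1)).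
Qed.

Lemma coef_sub_lead a (g : {poly R}) i :
  (g - (g`_a)%:P * 'X^a)`_i = if i == a then 0 else g`_i.
Proof.
rewrite coefB coefCM coefXn; case: eqVneq => [->|_]; first by rewrite mulr1 subrr.
by rewrite mulr0 subr0.
Qed.

Lemma max_poly_sub_lead a (g : {poly R}) : mono_mod_max a g -> max_poly (g - (g`_a)%:P * 'X^a).
Proof. by move=> [_ gO] i; rewrite coef_sub_lead; case: eqVneq => [_|/gO //]; apply: in_max0. Qed.

Lemma coef_mono_mul a b (f g : {poly R}) j :
  mono_mod_max a f -> mono_mod_max b g ->
  (f * g)`_j =
    (if j == (a + b)%N then f`_a * g`_b else 0)
  + (if (j < a)%N then 0 else f`_a * (g - (g`_b)%:P * 'X^b)`_(j - a))
  + (if (j < b)%N then 0 else g`_b * (f - (f`_a)%:P * 'X^a)`_(j - b)).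
Proof.
move=> hf hg; set p := f - _; set q := g - _.
have mp : max_poly p by apply: max_poly_sub_lead.
have mq : max_poly q by apply: max_poly_sub_lead.
have -> : f * g = (f`_a * g`_b)%:P * 'X^(a + b) + (f`_a)%:P * ('X^a * q)
                 + (g`_b)%:P * ('X^b * p) + p * q.
  by rewrite /p /q polyCM exprD; ring.
rewrite (max_poly_mul0 mp mq) addr0 ![in LHS]coefD ![in LHS]coefCM ![in LHS]coefXnM [in LHS]coefXn.
congr (_ + _ + _); first by case: eqP => _; rewrite ?mulr1 ?mulr0.
  by case: ifP => _; rewrite ?mulr0.
by case: ifP => _; rewrite ?mulr0.
Qed.

Lemma prod_mono_coef_low K (s : seq {poly R}) :
  (forall f, f \in s -> mono_mod_max (mdeg f) f /\ (mdeg f <= K)%N) ->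
  mono_mod_max (\sum_(f <- s) mdeg f) (\prod_(f <- s) f) /\
  forall j, (j + K < \sum_(f <- s) mdeg f)%N -> (\prod_(f <- s) f)`_j = 0.
Proof.
elim: s => [|g t IH] hs.
  by rewrite !big_nil; split => //; exact: (mono_mod_max_Xn 0).
have [mg gK] := hs g (mem_head _ _).
have [mP lowP] := IH (fun f ft => hs f (mem_behead (s := g :: t) ft)).
rewrite !big_cons; set a := mdeg g in mg gK *.
set B := (\sum_(f <- t) mdeg f)%N in mP lowP *; set P := \prod_(f <- t) f in mP lowP *.
split.
  split.
    rewrite (coef_mono_mul _ mg mP) eqxx ltnNge leq_addr ltnNge leq_addl /=.
    rewrite addKn addnK !coef_sub_lead !eqxx !mulr0 !addr0 unitrM.
    by case: mg => -> _; case: mP => -> _.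
  move=> i hi; rewrite (coef_mono_mul _ mg mP) (negbTE hi) add0r.
  by apply: in_maxD; case: ifP => _;
    try (apply: in_maxMl; exact: max_poly_sub_lead); exact: in_max0.
move=> j hj; rewrite (coef_mono_mul _ mg mP) ifF; last by apply/eqP; lia.
have -> : (j < B)%N by lia.
rewrite add0r addr0; case: ifP => // /negbT j_ge_a.
by rewrite coef_sub_lead ifF ?lowP ?mulr0 //; [lia | apply/eqP; lia].
Qed.

Lemma mono_mod_max_factors_Xn (s : seq {poly R}) n :
  \prod_(g <- s) g = 'X^n -> (forall g, g \in s -> poly_irr g) ->
  [/\ forall f, f \in s -> mono_mod_max (mdeg f) f,
      forall f, f \in s -> (0 < mdeg f)%N & (\sum_(f <- s) mdeg f)%N = n].
Proof.
move=> hp hirr; have [mono sum_n] := mono_mod_max_prod hp (mono_mod_max_Xn n).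
by split=> // f fs; apply: (poly_irr_mdeg_gt0 (hirr f fs) (mono f fs)).
Qed.

Lemma mdeg_top_shared (s : seq {poly R}) n f :
  \prod_(g <- s) g = 'X^n -> (forall g, g \in s -> poly_irr g) ->
  f \in s -> (1 < mdeg f)%N -> has (fun g => mdeg f <= mdeg g)%N (rem f s).
Proof.
move=> hp hirr fs f_gt1; apply/negPn/negP => /hasPn others.
have [mono _ sum_n] := mono_mod_max_factors_Xn hp hirr.
have f0 := poly_irr_coef0 (hirr f fs) (mono f fs) f_gt1.
set M := mdeg f in f_gt1 others f0.
have lowerM g : g \in rem f s -> mono_mod_max (mdeg g) g /\ (mdeg g <= M.-1)%N.
  by move=> gs; split; [apply/mono/(mem_rem gs) | have := others g gs; lia].
have [mP lowP] := prod_mono_coef_low lowerM.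
move: hp sum_n; rewrite !(big_rem _ fs) /= => hp sum_n.
set B := (\sum_(g <- rem f s) mdeg g)%N in mP lowP sum_n.
set P := \prod_(g <- rem f s) g in mP lowP hp.
have := congr1 (fun q : {poly R} => q`_B) hp.
rewrite /= (coef_mono_mul _ (mono f fs) mP) coefXn ltnn subnn coef_sub_lead.
have -> : (B == mdeg f + B)%N = false by apply/eqP; lia.
have -> : (B == n)%N = false by apply/eqP; lia.
rewrite add0r [X in _ + P`_B * X]coef_sub_lead.
have -> : (0 == mdeg f)%N = false by apply/eqP; lia.
have -> : (if (B < mdeg f)%N then 0
           else f`_(mdeg f) * (if (B - mdeg f)%N == B then 0 else P`_(B - mdeg f))) = 0.
  by case: ifP => // /negbT B_ge_M; rewrite ifF ?lowP ?mulr0 //; [lia | apply/eqP; lia].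
by rewrite add0r => /(canRL (mulKr (proj1 mP))); rewrite mulr0 => /eqP; apply/negP.
Qed.

Lemma mdeg_partition_Xn (s : seq {poly R}) n :
  \prod_(g <- s) g = 'X^n -> (forall g, g \in s -> poly_irr g) ->
  let ds := [seq mdeg f | f <- s] in
  [/\ all (leq 1) ds, sumn ds = n & forall d, d \in ds -> (1 < d -> 1 < count (leq d) ds)%N].
Proof.
move=> hp hirr ds; have [_ pos sum_n] := mono_mod_max_factors_Xn hp hirr.
split; first by apply/allP => _ /mapP [f fs ->]; exact: pos.
  by rewrite sumnE big_map.
move=> _ /mapP [f fs ->] f_gt1.
rewrite count_map (permP (perm_to_rem fs)) /= leqnn add1n ltnS -has_count.
exact: mdeg_top_shared hp hirr fs f_gt1.
Qed.

Section MaxIdealOfOrderTwo.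
Variable e : R.
Hypothesis e_neq0 : e != 0.
Hypothesis e_max : in_max e.
Hypothesis max_0_or_e : forall x, in_max x -> x = 0 \/ x = e.

Lemma mulr_unit_e u : u \is a GRing.unit -> u * e = e.
Proof.
move=> hu; case: (max_0_or_e (in_maxMl u e_max)) => // ue0.
by move: e_neq0; rewrite -(mulKr hu e) ue0 mulr0 eqxx.
Qed.

Lemma mulrn_e c : e *+ c = e *+ odd c.
Proof.
have ee : e + e = 0.
  case: (max_0_or_e (in_maxD e_max e_max)) => // /(canRL (addrK e)).
  by rewrite subrr => e0; move: e_neq0; rewrite -e0 eqxx.
by elim: c => [|c IH] //; rewrite mulrS IH /=; case: (odd c); rewrite ?mulr1n ?mulr0n ?ee ?addr0.
Qed.

Lemma prod_coef_count K (s : seq {poly R}) j : (0 < K)%N ->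
  (forall f, f \in s -> [/\ mono_mod_max (mdeg f) f, (mdeg f <= K)%N & (mdeg f = K -> f`_0 = e)]) ->
  (j + K = \sum_(f <- s) mdeg f)%N ->
  (\prod_(f <- s) f)`_j = e *+ count (fun f => mdeg f == K) s.
Proof.
move=> K_gt0; elim: s j => [|g t IH] j hs; first by rewrite big_nil; lia.
have [mg gK g0] := hs g (mem_head _ _).
have ht f : f \in t -> [/\ mono_mod_max (mdeg f) f, (mdeg f <= K)%N & (mdeg f = K -> f`_0 = e)].
  by move=> ft; apply: hs; rewrite inE ft orbT.
have [mP _] := @prod_mono_coef_low K t (fun f ft => let: And3 m k _ := ht f ft in conj m k).
rewrite !big_cons /= => hj.
set a := mdeg g in mg gK g0 hj *; set B := (\sum_(f <- t) mdeg f)%N in mP hj IH *.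
set P := \prod_(f <- t) f in mP *.
rewrite (coef_mono_mul _ mg mP) ifF ?add0r; last by apply/eqP; lia.
have t_term : (if (j < a)%N then 0 else g`_a * (P - (P`_B)%:P * 'X^B)`_(j - a))
              = e *+ count (fun f => mdeg f == K) t.
  case: ifP => [j_lt_a | /negbT j_ge_a]; last first.
    rewrite coef_sub_lead ifF; last by apply/eqP; lia.
    by rewrite IH // 1?mulrnAr ?mulr_unit_e //; [case: mg | lia].
  suff -> : count (fun f => mdeg f == K) t = 0%N by [].
  apply/eqP; rewrite -leqn0 leqNgt -has_count; apply/hasP => -[f ft /eqP fK].
  by move: hj; rewrite /B (big_rem _ ft) /=; lia.
have g_term : (if (j < B)%N then 0 else P`_B * (g - (g`_a)%:P * 'X^a)`_(j - B))
              = e *+ (a == K).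
  case: ifP => [j_lt_B | /negbT j_ge_B].
    by rewrite (_ : a == K = false) //; apply/eqP; lia.
  have aK : a = K by lia.
  rewrite coef_sub_lead ifF; last by apply/eqP; lia.
  have -> : (j - B)%N = 0%N by lia.
  by rewrite g0 // mulr_unit_e ?aK ?eqxx //; case: mP.
by rewrite t_term g_term -mulrnDr addnC.
Qed.

Lemma mdeg_top_count_even (s : seq {poly R}) n K :
  \prod_(g <- s) g = 'X^n -> (forall g, g \in s -> poly_irr g) -> (1 < K)%N ->
  (forall g, g \in s -> (mdeg g <= K)%N) -> ~~ odd (count (fun f => mdeg f == K) s).
Proof.
move=> hp hirr K_gt1 le_K; apply/negP => odd_count.
have [mono _ sum_n] := mono_mod_max_factors_Xn hp hirr.
have /hasP [f fs /eqP fK] : has (fun f => mdeg f == K) s.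
  by rewrite has_count; move: odd_count; case: count.
have K_le_n : (K <= n)%N by rewrite -sum_n (big_rem _ fs) -fK leq_addr.
have coef0_e g : g \in s -> mdeg g = K -> g`_0 = e.
  move=> gs gK; have [_ g_max] := mono g gs.
  have g0 : g`_0 != 0 by apply: poly_irr_coef0 (hirr g gs) (mono g gs) _; rewrite gK.
  have : in_max g`_0 by apply: g_max; rewrite gK; lia.
  by case/max_0_or_e => // g00; move: g0; rewrite g00 eqxx.
have := @prod_coef_count K s (n - K) (ltnW K_gt1)
  (fun g gs => And3 (mono g gs) (le_K g gs) (coef0_e g gs)).
rewrite sum_n subnK // hp coefXn mulrn_e odd_count (_ : (n - K == n)%N = false); last first.
  by apply/eqP; lia.
by move=> /(_ erefl) /esym /eqP; apply/negP.
Qed.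

Lemma is_length_Xn_neq_sub3 n k : (2 < n)%N -> is_length ('X^n : {poly R}) k -> k != (n - 3)%N.
Proof.
move=> n_gt2 [_ [s [<- [hirr hp]]]].
have [pos sum_n top] := mdeg_partition_Xn hp hirr.
rewrite -(size_map mdeg); apply: part_size_neq_sub3 => // small.
rewrite count_map; apply: (mdeg_top_count_even hp hirr) => // g gs.
exact: (allP small) (map_f mdeg gs).
Qed.

End MaxIdealOfOrderTwo.

Lemma is_length_Xn_bounds n k : (1 < n)%N -> is_length ('X^n : {poly R}) k ->
  [/\ (1 < k)%N, (k <= n)%N, k != n.-1 & (odd n -> k != 2%N)].
Proof.
move=> n_gt1 [k_gt0 [s [size_s [hirr hp]]]]; subst k; rewrite -(size_map mdeg) in k_gt0 *.
have [pos sum_n top] := mdeg_partition_Xn hp hirr.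
set ds := map mdeg s in k_gt0 pos sum_n top *; split.
- by have := part_size_neq1 pos sum_n top n_gt1; lia.
- exact: part_size_le.
- exact: part_size_neq_pred.
- exact: part_size_neq2.
Qed.

Lemma poly_irrX : poly_irr ('X : {poly R}).
Proof. by apply: (poly_irr_mono (mono_mod_max_Xn 1)) => //; left. Qed.

Lemma is_length_Xn_padX (s : seq {poly R}) d n k :
  (forall g, g \in s -> poly_irr g) -> \prod_(g <- s) g = 'X^d -> (d <= n)%N ->
  k = (size s + (n - d))%N -> (0 < k)%N -> is_length ('X^n : {poly R}) k.
Proof.
move=> hirr hp dn -> k_gt0; split => //.
exists (s ++ nseq (n - d) 'X); split; last split.
- by rewrite size_cat size_nseq.
- move=> g; rewrite mem_cat => /orP [/hirr //|].
  by rewrite mem_nseq => /andP [_ /eqP ->]; apply: poly_irrX.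
- by rewrite big_cat /= hp big_nseq iter_mulr mulr1 -exprD subnKC.
Qed.

Section Realisations.
Variable e : R.
Hypothesis e_neq0 : e != 0.
Hypothesis e_max : in_max e.

Let max_e : max_poly e%:P := max_polyC e_max.

Lemma is_length_Xn_pair n a : (1 < a)%N -> (2 * a <= n)%N ->
  is_length ('X^n : {poly R}) (n + 2 - 2 * a).
Proof.
move=> a_gt1 a_le; apply: (@is_length_Xn_padX [:: 'X^a + e%:P; 'X^a - e%:P] (2 * a)) => //=;
  try lia.
- move=> g; rewrite !inE => /orP [] /eqP ->; apply: poly_irr_XnD; try lia.
  + exact: max_e.
  + by right; rewrite coefC.
  + exact: max_polyN.
  + by right; rewrite coefN coefC eqxx oppr_eq0.
- rewrite !big_cons big_nil mulr1.
  have -> : ('X^a + e%:P) * ('X^a - e%:P) = 'X^a * 'X^a - e%:P * e%:P by ring.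
  by rewrite (max_poly_mul0 max_e max_e) subr0 -exprD addnn -mul2n.
Qed.

Lemma is_length_Xn_gadget n N : (0 < N)%N -> (2 * N + 6 <= n)%N ->
  is_length ('X^n : {poly R}) (n - 2 * N - 3).
Proof.
move=> N_gt0 N_le.
apply: (@is_length_Xn_padX
  [:: 'X^(N + 2) + (e%:P - e%:P * 'X^N); 'X^(N + 2) - e%:P; 'X^2 + e%:P] (2 * N + 6)) => //=;
  try lia.
- move=> g; rewrite !inE => /orP [/eqP ->|/orP [] /eqP ->]; apply: poly_irr_XnD; try lia.
  + by apply: max_polyB => //; rewrite mulrC; apply: max_polyMl.
  + right; rewrite coefB coefC coefCM coefXn (_ : (0 == N)%N = false); last by apply/eqP; lia.
    by rewrite mulr0 subr0.
  + exact: max_polyN.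
  + by right; rewrite coefN coefC eqxx oppr_eq0.
  + exact: max_e.
  + by right; rewrite coefC.
- rewrite !big_cons big_nil mulr1 (addnC N 2) (exprD _ 2 N).
  set t := 'X^N.
  have -> : ('X^2 * t + (e%:P - e%:P * t)) * (('X^2 * t - e%:P) * ('X^2 + e%:P))
      = 'X^6 * t * t - (e%:P * e%:P) * ('X^2 * t * t + (1 - t) * ('X^2 + e%:P)) by ring.
  by rewrite (max_poly_mul0 max_e max_e) mul0r subr0 -!exprD; congr ('X^_); lia.
Qed.

Lemma is_length_Xn_of n k : (1 < k)%N -> (k <= n)%N -> k != n.-1 ->
  (odd n -> k != 2%N) -> k != (n - 3)%N -> is_length ('X^n : {poly R}) k.
Proof.
move=> k_gt1 k_le_n k_neq_pred k_neq2 k_neq_sub3.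
have [->|k_neq_n] := eqVneq k n.
  by apply: (@is_length_Xn_padX [::] 0) => //; rewrite ?big_nil ?subn0 //; lia.
have [same_parity|] := eqVneq (odd k) (odd n).
  have -> : k = (n + 2 - 2 * ((n - k)./2 + 1))%N by lia.
  by apply: is_length_Xn_pair; lia.
move=> opp_parity; have -> : k = (n - 2 * (n - k - 3)./2 - 3)%N by lia.
by apply: is_length_Xn_gadget; lia.
Qed.

End Realisations.

Lemma is_length_Xn_sub3 n (x y : R) : in_max x -> in_max y -> x != 0 -> y != 0 -> x + y != 0 ->
  (6 <= n)%N -> is_length ('X^n : {poly R}) (n - 3).
Proof.
move=> x_max y_max x0 y0 xy0 n_ge6.
have mx := max_polyC x_max; have my := max_polyC y_max.
apply: (@is_length_Xn_padX [:: 'X^2 + x%:P; 'X^2 + y%:P; 'X^2 - (x%:P + y%:P)] 6) => //=; try lia.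
- move=> g; rewrite !inE => /orP [/eqP ->|/orP [] /eqP ->]; apply: poly_irr_XnD => //.
  + by right; rewrite coefC.
  + by right; rewrite coefC.
  + by apply: max_polyN; apply: max_polyD.
  + by right; rewrite coefN coefD !coefC eqxx oppr_eq0.
- rewrite !big_cons big_nil mulr1.
  have -> : ('X^2 + x%:P) * (('X^2 + y%:P) * ('X^2 - (x%:P + y%:P)))
     = 'X^6 - 'X^2 * (x%:P * x%:P + x%:P * y%:P + y%:P * y%:P)
       - x%:P * y%:P * (x%:P + y%:P) by ring.
  rewrite (max_poly_mul0 mx mx) (max_poly_mul0 mx my) (max_poly_mul0 my my).
  by rewrite !addr0 mulr0 !subr0 mul0r subr0.
Qed.

Lemma max_ideal_third (a r : R) : in_max a -> a != 0 -> r \notin [:: 0; a; 1; 1 + a] ->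
  exists x, [/\ in_max x, x != 0 & x != a].
Proof.
move=> a_max a0; rewrite !inE !negb_or => /and4P [r0 ra r1 r1a].
have [r_unit|] := boolP (r \is a GRing.unit); last by exists r.
have ra0 : r * a != 0.
  by apply: contra_neq a0 => /(canRL (mulKr r_unit)); rewrite mulr0.
have [raa|] := eqVneq (r * a) a; last by exists (r * a); split => //; apply: in_maxMl.
(* [r a = a] makes [r - 1] annihilate [a], so [r - 1] lies in [m]. *)
exists (r - 1); split; last by rewrite subr_eq addrC.
  apply/negP => r1_unit; move: a0.
  by rewrite -(mulKr r1_unit a) mulrBl raa mul1r subrr mulr0 eqxx.
by rewrite subr_eq0.
Qed.

Lemma card_gt4_max_pair (a : R) : in_max a -> a != 0 -> card_gt4 R ->
  exists x y : R, [/\ in_max x, in_max y, x != 0, y != 0 & x + y != 0].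
Proof.
move=> a_max a0 [s [s_uniq s_size]].
have /hasP [r _ r_out] : has (fun r => r \notin [:: 0; a; 1; 1 + a]) s.
  apply/negPn/negP => /hasPn s_sub.
  have := uniq_leq_size s_uniq (fun r rs => negbNE (s_sub r rs)).
  by rewrite s_size.
have [x [x_max x0 xa]] := max_ideal_third a_max a0 r_out.
have [aa|] := eqVneq (a + a) 0; last by exists a, a.
exists a, x; split => //; apply: contra xa => /eqP ax0.
by apply/eqP/(addrI a); rewrite ax0 aa.
Qed.

Lemma card_eq4_max_ideal (a : R) : in_max a -> a != 0 -> card_eq4 R ->
  forall x, in_max x -> x = 0 \/ x = a.
Proof.
move=> a_max a0 [s [_ [s_size s_all]]] x x_max.
have [->|x0] := eqVneq x 0; first by left.
have [->|xa] := eqVneq x a; [by right | exfalso].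
(* [0, a, x] and their translates by [1] would be six distinct elements *)
pose t := [:: 0; a; x].
have t_max y : y \in t -> in_max y.
  by rewrite !inE => /or3P [] /eqP -> //; exact: in_max0.
have : uniq (t ++ map (fun y => 1 + y) t).
  have t_uniq : uniq t by rewrite /= !inE !negb_or ![0 == _]eq_sym [a == x]eq_sym a0 x0 xa.
  rewrite cat_uniq (map_inj_uniq (addrI 1)) t_uniq andbT andTb.
  apply/hasPn => _ /mapP [y /t_max y_max ->]; apply/negP => /t_max.
  by rewrite /in_max unitrD_max ?unitr1.
by move=> /uniq_leq_size /(_ (fun y _ => s_all y)); rewrite s_size.
Qed.

End MaxSquareZero.

Unset Implicit Arguments.
Theorem theorem4p14 (R : comUnitRingType) (n : nat) :
  artinian R -> local_ring R ->
  (exists a : R, in_max a /\ a != 0) ->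
  (forall a b : R, in_max a -> in_max b -> a * b = 0) ->
  (7 <= n)%N ->
  (card_gt4 R ->
     forall k : nat, is_length ('X^n : {poly R}) k <->
       (if odd n then ((3 <= k <= n - 2)%N \/ k = n)
        else ((2 <= k <= n - 2)%N \/ k = n))) /\
  (card_eq4 R ->
     forall k : nat, is_length ('X^n : {poly R}) k <->
       (if odd n then ((3 <= k <= n - 4)%N \/ k = (n - 2)%N \/ k = n)
        else ((2 <= k <= n - 4)%N \/ k = (n - 2)%N \/ k = n))).
Proof.
move=> _ R_local [e [e_max e_neq0]] max_mul0 n_ge7.
have n_gt2 : (2 < n)%N by lia.
have bounds k := @is_length_Xn_bounds R R_local max_mul0 n k (ltnW n_gt2).
have realise k := @is_length_Xn_of R R_local max_mul0 e e_neq0 e_max n k.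
split => [gt4 | eq4] k; split.
- by case/bounds; case: odd; lia.
- have [x [y [x_max y_max x0 y0 xy0]]] := card_gt4_max_pair e_max e_neq0 gt4.
  have [->|k_neq_sub3] := eqVneq k (n - 3)%N.
    by move=> _; apply: (is_length_Xn_sub3 R_local max_mul0 x_max y_max x0 y0 xy0); lia.
  by move=> hk; apply: realise; move: hk; case: odd; lia.
- have max_0_or_e := card_eq4_max_ideal R_local e_max e_neq0 eq4.
  move=> hk; have := is_length_Xn_neq_sub3 R_local max_mul0 e_neq0 e_max max_0_or_e n_gt2 hk.
  by case/bounds: hk; case: odd; lia.
- by move=> hk; apply: realise; move: hk; case: odd; lia.
Qed.
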